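(* Let $G$ be a finite simple graph and let $\mathcal{P}'\subset\mathcal{P}$ be sets of vertices of $G$, with no two vertices of $\mathcal{P}$ adjacent, $|\mathcal{P}'|=m_0$ and $|\mathcal{P}|=m_0+m$ ($m_0,m\ge0$ integers). If the pinned graph $(G,\mathcal{P}')$ is $k$-admissible, then the pinned graph $(G,\mathcal{P})$ is $(k+m)$-admissible.
   Context: For a pinned graph $(G,\mathcal{Q})$ with $G=(\mathcal{V},\mathcal{E})$ and $q=|\mathcal{Q}|$, a construction order is an ordering $v_1,\dots,v_l$ of $\mathcal{V}$ whose first $q$ entries are exactly the vertices of $\mathcal{Q}$; for $i>q$ the back-degree of $v_i$ is the number of vertices among $v_1,\dots,v_{i-1}$ adjacent to $v_i$. $(G,\mathcal{Q})$ is $k$-admissible if some construction order has all back-degrees (for $i>q$) at most $k$. *)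

From mathcomp Require Import all_boot all_order.
Set Implicit Arguments. Unset Strict Implicit. Unset Printing Implicit Defensive.

Definition simple_graph (T : finType) (e : rel T) : Prop :=
  symmetric e /\ irreflexive e.

Definition construction_order (T : finType) (Q : {set T}) (s : seq T) : Prop :=
  [/\ uniq s, (forall v : T, v \in s) & [set x in take #|Q| s] = Q].

Definition back_degree (T : finType) (e : rel T) (s : seq T) (i : nat) (x0 : T) : nat :=
  count (fun u => e u (nth x0 s i)) (take i s).

Definition admissible (T : finType) (e : rel T) (Q : {set T}) (k : nat) : Prop :=
  exists s : seq T, construction_order Q s /\
    forall (i : nat) (x0 : T), #|Q| <= i < size s -> back_degree e s i x0 <= k.

From mathcomp Require Import all_boot all_order.
Set Implicit Arguments. Unset Strict Implicit. Unset Printing Implicit Defensive.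

(* Reorder a construction order of (G, P') by moving the vertices of P to the
   front, keeping the relative order of the vertices within P and within its
   complement.  A vertex v outside P then sees, before it, its old earlier
   neighbours (at most k, as v is not pinned in P') together with the vertices
   of P that used to come after it; the latter avoid the prefix P' of the old
   order, so there are at most |P \ P'| = m of them. *)

Definition vertex_back_degree (T : eqType) (e : rel T) (s : seq T) (v : T) : nat :=
  count (e^~ v) (take (index v s) s).

Lemma back_degree_index (T : finType) (e : rel T) (s : seq T) (v x0 : T) :
  v \in s -> back_degree e s (index v s) x0 = vertex_back_degree e s v.
Proof. by move=> vs; rewrite /back_degree nth_index. Qed.

Lemma take_index_cat (T : eqType) (s1 s2 : seq T) (v : T) :
  v \notin s1 -> take (index v (s1 ++ s2)) (s1 ++ s2) = s1 ++ take (index v s2) s2.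
Proof.
by move=> /negbTE v_s1; rewrite index_cat v_s1 take_cat ltnNge leq_addr addKn.
Qed.

Lemma take_index_filter (T : eqType) (a : pred T) (s : seq T) (v : T) :
  a v -> take (index v (filter a s)) (filter a s) = filter a (take (index v s) s).
Proof.
move=> av; elim: s => //= x s IHs; have [->|xv] := eqVneq x v.
  by rewrite av /= eqxx.
by case ax: (a x); rewrite /= ax -IHs ?(negbTE xv).
Qed.

Lemma notin_take_drop (T : eqType) (s : seq T) (i : nat) (x : T) :
  uniq s -> x \in drop i s -> x \notin take i s.
Proof.
rewrite -{1}(cat_take_drop i s) cat_uniq => /and3P[_ /hasPn disj _].
exact: disj.
Qed.

Lemma count_mem_total (T : finType) (A : {set T}) (s : seq T) :
  uniq s -> (forall v, v \in s) -> count (mem A) s = #|A|.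
Proof.
move=> us alls; rewrite -size_filter.
have /card_uniqP <- : uniq [seq x <- s | x \in A] by exact: filter_uniq.
by apply: eq_card => x; rewrite mem_filter alls andbT.
Qed.

Section ConstructionOrder.

Variables (T : finType) (Q : {set T}) (s : seq T).
Hypothesis s_order : construction_order Q s.

Lemma construction_order_memE (v : T) : (v \in Q) = (index v s < #|Q|).
Proof.
by case: s_order => _ alls Qs; rewrite -{1}Qs inE in_take.
Qed.

Lemma construction_order_notin (i : nat) (x0 : T) :
  #|Q| <= i < size s -> nth x0 s i \notin Q.
Proof.
case: s_order => us _ _ /andP[Qi i_s].
by rewrite construction_order_memE index_uniq // -leqNgt.
Qed.

Lemma count_mem_drop_index (P : {set T}) (v : T) :
  v \notin Q -> count (mem P) (drop (index v s) s) <= #|P :\: Q|.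
Proof.
case: s_order => us alls _; rewrite construction_order_memE -leqNgt => Qv.
have Q_prefix x : x \in Q -> x \in take (index v s) s.
  by rewrite in_take // construction_order_memE => /leq_trans; apply.
rewrite -(count_mem_total _ us alls) -{3}(cat_take_drop (index v s) s) count_cat.
apply: leq_trans (leq_addl _ _); apply/eq_leq/eq_in_count => x /= x_drop.
suff xQ : x \notin Q by rewrite inE xQ.
by apply: contra (notin_take_drop us x_drop); apply: Q_prefix.
Qed.

End ConstructionOrder.

Lemma admissibleP (T : finType) (e : rel T) (Q : {set T}) (k : nat) :
  admissible e Q k <->
  exists2 s, construction_order Q s &
    forall v, v \notin Q -> vertex_back_degree e s v <= k.
Proof.
split=> [[s [s_order bound]] | [s s_order bound]]; exists s => //.
  move=> v vQ; have vs : v \in s by case: s_order.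
  rewrite -(back_degree_index e v vs); apply: bound.
  by rewrite index_mem vs andbT leqNgt -(construction_order_memE s_order).
split=> // i x0 Qi; have := construction_order_notin s_order x0 Qi.
case/andP: Qi => _ i_s; case: s_order => us _ _ /bound.
by rewrite -(back_degree_index e x0 (mem_nth x0 i_s)) index_uniq.
Qed.

Definition pin_first (T : eqType) (P : pred T) (s : seq T) : seq T :=
  filter P s ++ filter (predC P) s.

Lemma construction_order_pin_first (T : finType) (P : {set T}) (s : seq T) :
  uniq s -> (forall v, v \in s) -> construction_order P (pin_first (mem P) s).
Proof.
move=> us alls; have perm_s := permEl (perm_filterC (mem P) s); split.
- by rewrite (perm_uniq perm_s).
- by move=> v; rewrite (perm_mem perm_s).
- rewrite take_size_cat ?size_filter ?count_mem_total //.
  by apply/setP => x; rewrite inE mem_filter alls andbT.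
Qed.

Lemma vertex_back_degree_pin_first (T : eqType) (e : rel T) (P : pred T)
    (s : seq T) (v : T) :
  ~~ P v ->
  vertex_back_degree e (pin_first P s) v <=
    vertex_back_degree e s v + count P (drop (index v s) s).
Proof.
move=> Pv; set t := take (index v s) s; set d := drop (index v s) s.
have filter_s : filter P s = filter P t ++ filter P d by rewrite -filter_cat cat_take_drop.
have count_t : count (e^~ v) (filter P t) + count (e^~ v) (filter (predC P) t) =
    count (e^~ v) t.
  by rewrite -count_cat; apply/permP/permEl/perm_filterC.
rewrite /vertex_back_degree take_index_cat; last by rewrite mem_filter (negbTE Pv).
rewrite take_index_filter // -/t filter_s !count_cat -count_t addnAC leq_add2l.
by rewrite count_filter; apply: sub_count => x /andP[].
Qed.

Theorem proposition4p5 (T : finType) (e : rel T) (P' P : {set T}) (m0 m k : nat) :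
  simple_graph e ->
  P' \subset P ->
  (forall u v, u \in P -> v \in P -> ~~ e u v) ->
  #|P'| = m0 -> #|P| = m0 + m ->
  admissible e P' k ->
  admissible e P (k + m).
Proof.
move=> _ sP'P _ cP' cP /admissibleP[s s_order bound].
have [us alls _] := s_order.
have cPdiff : #|P :\: P'| = m by rewrite cardsD (setIidPr sP'P) cP cP' addKn.
apply/admissibleP; exists (pin_first (mem P) s).
  exact: construction_order_pin_first.
move=> v vP; have vP' : v \notin P' by apply: contra vP; apply: (subsetP sP'P).
apply: leq_trans (vertex_back_degree_pin_first e s vP) _.
by rewrite -cPdiff leq_add // ?bound // count_mem_drop_index.
Qed.
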